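(* Let $k$ be an algebraically closed field of characteristic $2$, $S=\mathbf{V}(f)\subset\mathbb{A}^3$ with $f = x^2+y^2z+yz^2$, and $m\ge 5$. Let $R_m = k[x_0,\dots,x_m,y_0,\dots,y_m,z_0,\dots,z_m]$, $(\mathbb{A}^3)_m=\mathrm{Spec}\,R_m$, and define $f^{(j)}\in R_m$ by $f(\sum_{i=0}^m x_it^i,\sum_{i=0}^m y_it^i,\sum_{i=0}^m z_it^i) = \sum_{j=0}^m f^{(j)}t^j$ in $R_m[t]/\langle t^{m+1}\rangle$. Let $S_m^0 = \mathbf{V}(x_0,y_0,z_0,f^{(0)},\dots,f^{(m)})\subseteq(\mathbb{A}^3)_m$ be the singular fiber of the $m$-th jet scheme $S_m=\mathrm{Spec}\,R_m/\langle f^{(0)},\dots,f^{(m)}\rangle$. Define $I_m^0 = \langle x_0,x_1,x_2,y_0,y_1,z_0,z_1\rangle + \langle f^{(0)},\dots,f^{(m)}\rangle$, $I_m^1 = J_m^1 (R_m)_{z_1}\cap R_m$, $I_m^2 = J_m^2 (R_m)_{y_1}\cap R_m$, $I_m^3 = J_m^3 (R_m)_{y_1}\cap R_m$, where $J_m^1 = \langle x_0,x_1,y_0,y_1,z_0\rangle + \langle f^{(0)},\dots,f^{(m)}\rangle$, $J_m^2 = \langle x_0,x_1,y_0,z_0,z_1\rangle + \langle f^{(0)},\dots,f^{(m)}\rangle$, $J_m^3 = \langle x_0,x_1,y_0,z_0,y_1+z_1\rangle + \langle f^{(0)},\dots,f^{(m)}\rangle$, and $Z_m^i = \mathbf{V}(I_m^i)$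 for $i=0,1,2,3$ (these are the irreducible components of $S_m^0$). Then the maximal elements of $\{Z_m^i\cap Z_m^j \mid i,j\in\{0,1,2,3\},\ i\ne j\}$ with respect to inclusion are $Z_m^0\cap Z_m^1$, $Z_m^0\cap Z_m^2$ and $Z_m^0\cap Z_m^3$, and these three sets are pairwise distinct. In particular $Z_m^1\cap Z_m^2,\ Z_m^2\cap Z_m^3,\ Z_m^3\cap Z_m^1\subsetneq Z_m^0$.
   Context: $(R_m)_h$ is the localization of $R_m$ at powers of $h$; $\mathbf{V}(\cdot)$ denotes zero sets in $(\mathbb{A}^3)_m$. *)

From HB Require Import structures.
From mathcomp Require Import all_boot all_order all_algebra.
From mathcomp Require Import mpoly.
Set Implicit Arguments. Unset Strict Implicit. Unset Printing Implicit Defensive.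
Import GRing.Theory.
Local Open Scope ring_scope.

Definition nv (m : nat) : nat := (m.+1 + (m.+1 + m.+1))%N.

Definition ix (m : nat) (i : 'I_m.+1) : 'I_(nv m) := lshift _ i.
Definition iy (m : nat) (i : 'I_m.+1) : 'I_(nv m) := rshift m.+1 (lshift m.+1 i).
Definition iz (m : nat) (i : 'I_m.+1) : 'I_(nv m) := rshift m.+1 (rshift m.+1 i).

Section Jets.
Variable k : fieldType.
Variable m : nat.
Notation Rm := {mpoly k[nv m]}.

Definition xv (i : nat) : Rm := 'X_(ix (inord i)).
Definition yv (i : nat) : Rm := 'X_(iy (inord i)).
Definition zv (i : nat) : Rm := 'X_(iz (inord i)).

Definition arcX : {poly Rm} := \sum_(i < m.+1) ('X_(ix i))%:P * 'X^i.
Definition arcY : {poly Rm} := \sum_(i < m.+1) ('X_(iy i))%:P * 'X^i.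
Definition arcZ : {poly Rm} := \sum_(i < m.+1) ('X_(iz i))%:P * 'X^i.

(* f(x,y,z) = x^2 + y^2 z + y z^2 evaluated at the arcs; f^{(j)} is the
   coefficient of t^j (for j <= m this is the coefficient modulo t^{m+1}). *)
Definition farc : {poly Rm} :=
  arcX ^+ 2 + arcY ^+ 2 * arcZ + arcY * arcZ ^+ 2.
Definition fj (j : nat) : Rm := farc`_j.

Definition fgens : seq Rm := [seq fj j | j <- iota 0 m.+1].

Definition in_ideal (gens : seq Rm) (g : Rm) : Prop :=
  exists cs : seq Rm, size cs = size gens /\
    g = \sum_(i < size gens) cs`_i * gens`_i.

(* membership in J R_h ∩ R_m (saturation of J by h) *)
Definition in_sat (gens : seq Rm) (h g : Rm) : Prop :=
  exists N : nat, in_ideal gens (h ^+ N * g).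

Definition point := 'I_(nv m) -> k.
Definition zeroset (I : Rm -> Prop) : point -> Prop :=
  fun a => forall g, I g -> g.@[a] = 0.

Definition I0 : Rm -> Prop :=
  in_ideal ([:: xv 0; xv 1; xv 2; yv 0; yv 1; zv 0; zv 1] ++ fgens).
Definition I1 : Rm -> Prop :=
  in_sat ([:: xv 0; xv 1; yv 0; yv 1; zv 0] ++ fgens) (zv 1).
Definition I2 : Rm -> Prop :=
  in_sat ([:: xv 0; xv 1; yv 0; zv 0; zv 1] ++ fgens) (yv 1).
Definition I3 : Rm -> Prop :=
  in_sat ([:: xv 0; xv 1; yv 0; zv 0; yv 1 + zv 1] ++ fgens) (yv 1).

Definition Zm (i : nat) : point -> Prop :=
  zeroset (match i with 0 => I0 | 1 => I1 | 2 => I2 | _ => I3 end).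

End Jets.

Definition psub (T : Type) (A B : T -> Prop) : Prop := forall a, A a -> B a.
Definition pseteq (T : Type) (A B : T -> Prop) : Prop := psub A B /\ psub B A.
Definition pcap (T : Type) (A B : T -> Prop) : T -> Prop := fun a => A a /\ B a.
Definition psubproper (T : Type) (A B : T -> Prop) : Prop :=
  psub A B /\ ~ psub B A.

Definition in_family (k : fieldType) (m : nat) (A : point k m -> Prop) : Prop :=
  exists i j : nat, [/\ (i < 4)%N, (j < 4)%N, i != j &
    pseteq A (pcap (@Zm k m i) (@Zm k m j))].

Definition maximal_in_family (k : fieldType) (m : nat) (A : point k m -> Prop)
  : Prop :=
  in_family A /\ forall B, in_family B -> psub A B -> pseteq A B.

From HB Require Import structures.
From mathcomp Require Import all_boot all_order all_algebra.
From mathcomp Require Import mpoly ring.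
Set Implicit Arguments. Unset Strict Implicit. Unset Printing Implicit Defensive.
Import GRing.Theory.
Local Open Scope ring_scope.

(* Each of Z^1, Z^2, Z^3 lies in V(x0, x1, y0, z0, f^(j)) and imposes one of
   the linear conditions y1 = 0, z1 = 0, y1 + z1 = 0; any two of these force
   y1 = z1 = 0, and then f^(4) = x2^2 forces x2 = 0, so Z^i ∩ Z^j ⊆ Z^0 for
   distinct i, j >= 1.  Conversely the jets (0, u t^2, v t^2) with
   (u, v) = (0,1), (1,0), (1,1) separate the components.  The one with index
   i lies in Z^0, and in Z^i because it is the limit s -> 0 of the jets
   (0, u (t^2 + s t), v (t^2 + s t)), along which the saturating variable is
   nonzero.  It avoids the other Z^j because modulo J^j the coefficient f^(5)
   becomes h (h c3 + c2^2) (h the saturating variable, c = y, z or y + z),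
   so h c3 + c2^2 lies in I^j, and it takes the value 1 at the jet. *)

Definition fS (R : comNzRingType) (x y z : R) : R := x ^+ 2 + y ^+ 2 * z + y * z ^+ 2.

Section SurfaceEquation.
Variable R : comNzRingType.
Implicit Types (x y z : R) (P Q D : {poly R}).

Lemma fS_swap x y z : fS x y z = fS x z y.
Proof. by rewrite /fS; ring. Qed.

Lemma fS_shear x y z : 2 \in [pchar R] -> fS x y z = fS x (y + z) y.
Proof.
move=> /pcharf0 two0.
have -> : fS x (y + z) y = fS x y z + 2%:R * (y ^+ 3 + y ^+ 2 * z) by rewrite /fS; ring.
by rewrite two0 mul0r addr0.
Qed.

Lemma coef1M P Q : (P * Q)`_1 = P`_0 * Q`_1 + P`_1 * Q`_0.
Proof. by rewrite coefM big_ord_recr big_ord1. Qed.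

Lemma coef4_fS_X2 P Q D : (fS ('X^2 * P) ('X^2 * Q) ('X^2 * D))`_4 = P`_0 ^+ 2.
Proof.
have -> : fS ('X^2 * P) ('X^2 * Q) ('X^2 * D) =
  'X^4 * P ^+ 2 + 'X^6 * (Q ^+ 2 * D + Q * D ^+ 2) by rewrite /fS; ring.
by rewrite coefD !coefXnM /= addr0 expr2 coef0M.
Qed.

Lemma coef5_fS_X2X P Q D : 2 \in [pchar R] ->
  (fS ('X^2 * P) ('X^2 * Q) ('X * D))`_5 = D`_0 * (D`_0 * Q`_1 + Q`_0 ^+ 2).
Proof.
move=> /pcharf0 two0.
have -> : fS ('X^2 * P) ('X^2 * Q) ('X * D) =
  'X^4 * (P ^+ 2 + Q * D ^+ 2) + 'X^5 * (Q ^+ 2 * D) by rewrite /fS; ring.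
rewrite coefD !coefXnM /= !expr2 coefD !coef1M !coef0M.
transitivity (D`_0 * (D`_0 * Q`_1 + Q`_0 ^+ 2) + 2%:R * (P`_0 * P`_1 + Q`_0 * D`_0 * D`_1)).
  by ring.
by rewrite two0 mul0r addr0.
Qed.

End SurfaceEquation.

Lemma map_poly_fS (R S : comNzRingType) (f : {rmorphism R -> S}) (X Y Z : {poly R}) :
  map_poly f (fS X Y Z) = fS (map_poly f X) (map_poly f Y) (map_poly f Z).
Proof. by rewrite /fS !rmorphD !rmorphM. Qed.

Section IdealMembership.
Variables (k : fieldType) (m : nat) (gens : seq {mpoly k[nv m]}).
Local Notation Rm := {mpoly k[nv m]}.
Local Notation I := (in_ideal gens).
Implicit Types (A B X Y Z : {poly Rm}).

Lemma in_ideal0 : I 0.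
Proof.
exists (nseq (size gens) 0); rewrite size_nseq; split=> //.
by rewrite big1 // => i _; rewrite nth_nseq if_same mul0r.
Qed.

Lemma in_idealD a b : I a -> I b -> I (a + b).
Proof.
move=> [ca [sa ->]] [cb [sb ->]].
exists (mkseq (fun i => ca`_i + cb`_i) (size gens)); rewrite size_mkseq; split=> //.
rewrite -big_split /=; apply: eq_bigr => i _.
by rewrite nth_mkseq ?ltn_ord // mulrDl.
Qed.

Lemma in_idealMl r a : I a -> I (r * a).
Proof.
move=> [ca [sa ->]].
exists (mkseq (fun i => r * ca`_i) (size gens)); rewrite size_mkseq; split=> //.
rewrite mulr_sumr; apply: eq_bigr => i _.
by rewrite nth_mkseq ?ltn_ord // mulrA.
Qed.

Lemma in_idealB a b : I a -> I b -> I (a - b).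
Proof. by move=> Ia /(in_idealMl (-1)); rewrite mulN1r; apply: in_idealD. Qed.

Lemma in_ideal_mem g : g \in gens -> I g.
Proof.
move=> gin; have lt_j : (index g gens < size gens)%N by rewrite index_mem.
exists (mkseq (fun i => (i == index g gens)%:R) (size gens)).
rewrite size_mkseq; split=> //.
rewrite (bigD1 (Ordinal lt_j)) //= big1 ?addr0 => [|i /eqP ne_i].
  by rewrite nth_mkseq // eqxx mul1r nth_index.
rewrite nth_mkseq ?ltn_ord //; case: eqP => [eq_i|]; last by rewrite mul0r.
by case: ne_i; apply: val_inj.
Qed.

Lemma in_ideal_coefM A B j : (forall i, I A`_i) -> I (A * B)`_j.
Proof.
move=> IA; rewrite coefM.
elim/big_rec: _ => [|i s _ Is]; first exact: in_ideal0.
by apply: in_idealD => //; rewrite mulrC; apply: in_idealMl.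
Qed.

Definition eqmod_coef (A B : {poly Rm}) : Prop := forall i, I (A - B)`_i.

Lemma eqmod_coefD A B (A' B' : {poly Rm}) :
  eqmod_coef A A' -> eqmod_coef B B' -> eqmod_coef (A + B) (A' + B').
Proof. by move=> eA eB i; rewrite opprD addrACA coefD; apply: in_idealD. Qed.

Lemma eqmod_coefM A B (A' B' : {poly Rm}) :
  eqmod_coef A A' -> eqmod_coef B B' -> eqmod_coef (A * B) (A' * B').
Proof.
move=> eA eB i.
have -> : A * B - A' * B' = (A - A') * B + (B - B') * A' by ring.
by rewrite coefD; apply: in_idealD; apply: in_ideal_coefM.
Qed.

Lemma eqmod_coef_fS X Y Z (X' Y' Z' : {poly Rm}) : eqmod_coef X X' -> eqmod_coef Y Y' ->
  eqmod_coef Z Z' -> eqmod_coef (fS X Y Z) (fS X' Y' Z').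
Proof.
move=> eX eY eZ; rewrite /fS !expr2.
by do !apply: eqmod_coefD; do !apply: eqmod_coefM.
Qed.

Lemma eqmod_coef_drop n A : (forall i, (i < n)%N -> I A`_i) ->
  eqmod_coef A ('X^n * drop_poly n A).
Proof.
move=> IA i; rewrite -{1}(poly_take_drop n A) mulrC addrK coef_take_poly.
by case: ltnP => [/IA //|_]; apply: in_ideal0.
Qed.

Lemma eqmod_coef_in_ideal A B i : eqmod_coef A B -> I A`_i -> I B`_i.
Proof.
move=> eAB IA; have -> : B`_i = A`_i - (A - B)`_i by rewrite coefB subKr.
exact: in_idealB.
Qed.

Lemma pchar2_mpoly : 2 \in [pchar k] -> 2 \in [pchar Rm].
Proof. exact: (rmorph_pchar (@mpolyC (nv m) k)). Qed.

Lemma in_ideal_coef4_fS X Y Z :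
  I X`_0 -> I X`_1 -> I Y`_0 -> I Y`_1 -> I Z`_0 -> I Z`_1 ->
  I (fS X Y Z)`_4 -> I (X`_2 ^+ 2).
Proof.
move=> IX0 IX1 IY0 IY1 IZ0 IZ1 /eqmod_coef_in_ideal.
have -> : X`_2 = (drop_poly 2 X)`_0 by rewrite coef_drop_poly.
rewrite -(coef4_fS_X2 _ (drop_poly 2 Y) (drop_poly 2 Z)); apply.
by apply: eqmod_coef_fS; apply: eqmod_coef_drop => -[|[|]].
Qed.

Lemma in_ideal_coef5_fS X Y Z : 2 \in [pchar k] ->
  I X`_0 -> I X`_1 -> I Y`_0 -> I Y`_1 -> I Z`_0 ->
  I (fS X Y Z)`_5 -> I (Z`_1 * (Z`_1 * Y`_3 + Y`_2 ^+ 2)).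
Proof.
move=> /pchar2_mpoly pchar2 IX0 IX1 IY0 IY1 IZ0 /eqmod_coef_in_ideal.
have -> : Z`_1 * (Z`_1 * Y`_3 + Y`_2 ^+ 2) =
  (fS ('X^2 * drop_poly 2 X) ('X^2 * drop_poly 2 Y) ('X * drop_poly 1 Z))`_5.
  by rewrite coef5_fS_X2X // !coef_drop_poly.
apply; apply: eqmod_coef_fS; try by apply: eqmod_coef_drop => -[|[|]].
by have := eqmod_coef_drop (n := 1) (A := Z); rewrite expr1; apply=> -[].
Qed.

End IdealMembership.

Section Arcs.
Variables (k : fieldType) (m : nat).
Local Notation Rm := {mpoly k[nv m]}.

Definition arc (c : 'I_m.+1 -> 'I_(nv m)) : {poly Rm} :=
  \sum_(i < m.+1) ('X_(c i))%:P * 'X^i.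

Lemma arcE : (arcX k m = arc (@ix m)) * (arcY k m = arc (@iy m)) * (arcZ k m = arc (@iz m)).
Proof. by []. Qed.

Lemma coef_arc c i : (arc c)`_i = if (i < m.+1)%N then 'X_(c (inord i)) else 0.
Proof.
have -> : arc c = \poly_(j < m.+1) 'X_(c (inord j)).
  by rewrite poly_def; apply: eq_bigr => j _; rewrite mul_polyC inord_val.
by rewrite coef_poly.
Qed.

Lemma map_arc (f : Rm -> k) c (R : {poly k}) :
  f 0 = 0 -> (forall i : 'I_m.+1, f 'X_(c i) = R`_i) -> (size R <= m.+1)%N ->
  map_poly f (arc c) = R.
Proof.
move=> f0 fX szR; apply/polyP => i; rewrite coef_map_id0 // coef_arc.
case: ltnP => [lt_im | le_mi]; first by rewrite fX inordK.
by rewrite f0 nth_default // (leq_trans szR).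
Qed.

End Arcs.
Arguments arc {k m}.

Section Certificates.
Variables (k : fieldType) (m : nat).
Hypotheses (hm : (5 <= m)%N) (pchar2 : 2 \in [pchar k]).
Local Notation Rm := {mpoly k[nv m]}.
Local Notation xv := (xv k m).
Local Notation yv := (yv k m).
Local Notation zv := (zv k m).
Local Notation fgens := (fgens k m).

Lemma coef_arcX i : (i <= 5)%N -> (arcX k m)`_i = xv i.
Proof. by move=> le_i5; rewrite arcE coef_arc ltnS (leq_trans le_i5 hm). Qed.
Lemma coef_arcY i : (i <= 5)%N -> (arcY k m)`_i = yv i.
Proof. by move=> le_i5; rewrite arcE coef_arc ltnS (leq_trans le_i5 hm). Qed.
Lemma coef_arcZ i : (i <= 5)%N -> (arcZ k m)`_i = zv i.
Proof. by move=> le_i5; rewrite arcE coef_arc ltnS (leq_trans le_i5 hm). Qed.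

Lemma in_ideal_coef_farc (L : seq Rm) j : (j <= m)%N ->
  in_ideal (L ++ fgens) (fS (arcX k m) (arcY k m) (arcZ k m))`_j.
Proof.
move=> le_jm; apply/in_ideal_mem; rewrite mem_cat; apply/orP; right.
by apply: (map_f (fj k m)); rewrite mem_iota.
Qed.

Lemma in_ideal_catl (L : seq Rm) g : g \in L -> in_ideal (L ++ fgens) g.
Proof. by move=> gL; apply/in_ideal_mem; rewrite mem_cat gL. Qed.

Lemma in_ideal_coef_arcX (L : seq Rm) i :
  (i <= 5)%N -> xv i \in L -> in_ideal (L ++ fgens) (arcX k m)`_i.
Proof. by move=> le_i5; rewrite coef_arcX //; apply: in_ideal_catl. Qed.
Lemma in_ideal_coef_arcY (L : seq Rm) i :
  (i <= 5)%N -> yv i \in L -> in_ideal (L ++ fgens) (arcY k m)`_i.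
Proof. by move=> le_i5; rewrite coef_arcY //; apply: in_ideal_catl. Qed.
Lemma in_ideal_coef_arcZ (L : seq Rm) i :
  (i <= 5)%N -> zv i \in L -> in_ideal (L ++ fgens) (arcZ k m)`_i.
Proof. by move=> le_i5; rewrite coef_arcZ //; apply: in_ideal_catl. Qed.

Lemma x2_sq_in_ideal :
  in_ideal ([:: xv 0; xv 1; yv 0; yv 1; zv 0; zv 1] ++ fgens) (xv 2 ^+ 2).
Proof.
rewrite -(coef_arcX (i := 2)) //.
apply: (in_ideal_coef4_fS _ _ _ _ _ _ (in_ideal_coef_farc _ (ltnW hm))).
- by apply: in_ideal_coef_arcX; rewrite // !inE eqxx.
- by apply: in_ideal_coef_arcX; rewrite // !inE eqxx ?orbT.
- by apply: in_ideal_coef_arcY; rewrite // !inE eqxx ?orbT.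
- by apply: in_ideal_coef_arcY; rewrite // !inE eqxx ?orbT.
- by apply: in_ideal_coef_arcZ; rewrite // !inE eqxx ?orbT.
- by apply: in_ideal_coef_arcZ; rewrite // !inE eqxx ?orbT.
Qed.

(* Modulo J^1, the coefficient f^(5) is z1 (z1 y3 + y2^2). *)
Lemma I1_cert : I1 (zv 1 * yv 3 + yv 2 ^+ 2).
Proof.
exists 1%N; rewrite expr1 -[zv 1](coef_arcZ (i := 1)) // -[yv 3](coef_arcY (i := 3)) //.
rewrite -[yv 2](coef_arcY (i := 2)) //.
apply: (in_ideal_coef5_fS pchar2 _ _ _ _ _ (in_ideal_coef_farc _ hm)).
- by apply: in_ideal_coef_arcX; rewrite // !inE eqxx.
- by apply: in_ideal_coef_arcX; rewrite // !inE eqxx ?orbT.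
- by apply: in_ideal_coef_arcY; rewrite // !inE eqxx ?orbT.
- by apply: in_ideal_coef_arcY; rewrite // !inE eqxx ?orbT.
- by apply: in_ideal_coef_arcZ; rewrite // !inE eqxx ?orbT.
Qed.

Lemma I2_cert : I2 (yv 1 * zv 3 + zv 2 ^+ 2).
Proof.
exists 1%N; rewrite expr1 -[yv 1](coef_arcY (i := 1)) // -[zv 3](coef_arcZ (i := 3)) //.
rewrite -[zv 2](coef_arcZ (i := 2)) //.
have := in_ideal_coef_farc [:: xv 0; xv 1; yv 0; zv 0; zv 1] hm.
rewrite fS_swap; apply: (in_ideal_coef5_fS pchar2).
- by apply: in_ideal_coef_arcX; rewrite // !inE eqxx.
- by apply: in_ideal_coef_arcX; rewrite // !inE eqxx ?orbT.
- by apply: in_ideal_coef_arcZ; rewrite // !inE eqxx ?orbT.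
- by apply: in_ideal_coef_arcZ; rewrite // !inE eqxx ?orbT.
- by apply: in_ideal_coef_arcY; rewrite // !inE eqxx ?orbT.
Qed.

Lemma coef_arcYZ i : (i <= 5)%N -> (arcY k m + arcZ k m)`_i = yv i + zv i.
Proof. by move=> le_i5; rewrite -(coef_arcY le_i5) -(coef_arcZ le_i5) coefD. Qed.

(* In characteristic 2, (y, z) |-> (y + z, y) preserves f and brings J^3 to
   the shape of J^1. *)
Lemma I3_cert : I3 (yv 1 * (yv 3 + zv 3) + (yv 2 + zv 2) ^+ 2).
Proof.
exists 1%N; rewrite expr1.
have -> : yv 1 * (yv 1 * (yv 3 + zv 3) + (yv 2 + zv 2) ^+ 2) =
  (arcY k m)`_1 * ((arcY k m)`_1 * (arcY k m + arcZ k m)`_3 +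
                   (arcY k m + arcZ k m)`_2 ^+ 2).
  by rewrite -(coef_arcY (i := 1)) // -(coef_arcYZ (i := 3)) // -(coef_arcYZ (i := 2)).
have := in_ideal_coef_farc [:: xv 0; xv 1; yv 0; zv 0; yv 1 + zv 1] hm.
rewrite fS_shear ?(rmorph_pchar (@polyC _)) ?pchar2_mpoly //.
apply: (in_ideal_coef5_fS pchar2).
- by apply: in_ideal_coef_arcX; rewrite // !inE eqxx.
- by apply: in_ideal_coef_arcX; rewrite // !inE eqxx ?orbT.
- rewrite coef_arcYZ //.
  by apply: in_idealD; apply: in_ideal_catl; rewrite !inE eqxx ?orbT.
- by rewrite coef_arcYZ //; apply: in_ideal_catl; rewrite !inE eqxx ?orbT.
- by apply: in_ideal_coef_arcY; rewrite // !inE eqxx ?orbT.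
Qed.

End Certificates.

Section JetPoints.
Variables (k : fieldType) (m : nat).
Local Notation Rm := {mpoly k[nv m]}.
Local Notation point := (point k m).
Implicit Types (P Q W : {poly k}) (a : point) (gens : seq Rm).

Definition vanishes gens a : bool := all (fun g => g.@[a] == 0) gens.

Lemma zeroset_in_idealP gens a : zeroset (in_ideal gens) a <-> vanishes gens a.
Proof.
split=> [Za | /allP va g [cs [_ ->]]].
  by apply/allP => g /in_ideal_mem /Za ->.
rewrite raddf_sum /=; apply: big1 => i _.
by rewrite mevalM (eqP (va _ (mem_nth 0 _))) ?mulr0.
Qed.

Lemma zeroset_sat_vanishes gens h a : zeroset (in_sat gens h) a -> vanishes gens a.
Proof.
move=> Za; apply/zeroset_in_idealP => g Ig; apply: Za.
by exists 0%N; rewrite expr0 mul1r.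
Qed.

Definition jet_point P Q W : point := fun v =>
  match split v with
  | inl i => P`_i
  | inr w => match split w with inl i => Q`_i | inr i => W`_i end
  end.

Lemma jet_point_ix P Q W i : jet_point P Q W (ix i) = P`_i.
Proof. by rewrite /jet_point /ix (unsplitK (inl _)). Qed.
Lemma jet_point_iy P Q W i : jet_point P Q W (iy i) = Q`_i.
Proof. by rewrite /jet_point /iy (unsplitK (inr _)) (unsplitK (inl _)). Qed.
Lemma jet_point_iz P Q W i : jet_point P Q W (iz i) = W`_i.
Proof. by rewrite /jet_point /iz (unsplitK (inr _)) (unsplitK (inr _)). Qed.

Lemma meval_xv_jet P Q W i : (i <= m)%N -> (xv k m i).@[jet_point P Q W] = P`_i.
Proof. by move=> le_im; rewrite mevalXU jet_point_ix inordK. Qed.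
Lemma meval_yv_jet P Q W i : (i <= m)%N -> (yv k m i).@[jet_point P Q W] = Q`_i.
Proof. by move=> le_im; rewrite mevalXU jet_point_iy inordK. Qed.
Lemma meval_zv_jet P Q W i : (i <= m)%N -> (zv k m i).@[jet_point P Q W] = W`_i.
Proof. by move=> le_im; rewrite mevalXU jet_point_iz inordK. Qed.

Lemma jet_point_line P Q W P' Q' W' s v :
  jet_point (P + s *: P') (Q + s *: Q') (W + s *: W') v =
  jet_point P Q W v + s * jet_point P' Q' W' v.
Proof.
by rewrite /jet_point; case: split => [i|w]; last case: split => i; rewrite coefD coefZ.
Qed.

Lemma meval_fj_jet P Q W j : (size P <= m.+1)%N -> (size Q <= m.+1)%N ->
  (size W <= m.+1)%N -> (fj k m j).@[jet_point P Q W] = (fS P Q W)`_j.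
Proof.
move=> szP szQ szW; set a := jet_point P Q W.
have map_arc_jet (c : 'I_m.+1 -> 'I_(nv m)) (R : {poly k}) :
    (forall i, a (c i) = R`_i) -> (size R <= m.+1)%N -> map_poly (meval a) (arc c) = R.
  by move=> aR; apply: map_arc => [|i]; rewrite ?meval0 ?mevalXU.
rewrite -(map_arc_jet (@ix m) P (jet_point_ix P Q W) szP).
rewrite -(map_arc_jet (@iy m) Q (jet_point_iy P Q W) szQ).
by rewrite -(map_arc_jet (@iz m) W (jet_point_iz P Q W) szW) -map_poly_fS coef_map.
Qed.

Lemma vanishes_fgens_jet P Q W : (size P <= m.+1)%N -> (size Q <= m.+1)%N ->
  (size W <= m.+1)%N -> fS P Q W = 0 -> vanishes (fgens k m) (jet_point P Q W).
Proof.
move=> szP szQ szW f0; apply/allP => _ /mapP[j _ ->].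
by rewrite meval_fj_jet // f0 coef0.
Qed.

End JetPoints.

(* A root of q X + 1 is nonzero, hence a root of q. *)
Lemma closed_poly_eq0 (k : closedFieldType) (q : {poly k}) :
  (forall s, s != 0 -> q.[s] = 0) -> q = 0.
Proof.
move=> q0; apply/eqP; apply: contraT => nz_q.
have /closed_rootP[x /rootP] : size (q * 'X + 1%:P) != 1%N.
  by rewrite size_MXaddC (negbTE nz_q) /= eqSS size_poly_eq0.
rewrite hornerMXaddC; have [->|nz_x] := eqVneq x 0.
  by rewrite mulr0 add0r => /eqP; rewrite oner_eq0.
by rewrite q0 // mul0r add0r => /eqP; rewrite oner_eq0.
Qed.

Lemma horner_mmap_line (k : fieldType) n (c d : 'I_n -> k) (g : {mpoly k[n]}) s :
  (mmap (@polyC k) (fun i => (c i)%:P + (d i)%:P * 'X) g).[s] =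
  g.@[fun i => c i + s * d i].
Proof.
rewrite /mmap horner_sum mevalE; apply: eq_bigr => mo _.
rewrite hornerM hornerC /mmap1 horner_prod; congr (_ * _); apply: eq_bigr => i _.
by rewrite horner_exp hornerD hornerC hornerMX hornerC mulrC.
Qed.

Section SaturationLines.
Variables (k : closedFieldType) (m : nat).
Local Notation point := (point k m).

(* h^N g vanishes on the line and h does not for s != 0, so the polynomial
   s |-> g(a s) vanishes on k^*, hence everywhere. *)
Lemma zeroset_sat_line (gens : seq {mpoly k[nv m]}) h (a : k -> point) (d : point) :
  (forall s i, a s i = a 0 i + s * d i) ->
  (forall s, vanishes gens (a s)) -> (forall s, s != 0 -> h.@[a s] != 0) ->
  zeroset (in_sat gens h) (a 0).
Proof.
move=> a_line va nz_h g [N IhNg].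
pose q := mmap (@polyC k) (fun i => (a 0 i)%:P + (d i)%:P * 'X) g.
have qE s : q.[s] = g.@[a s].
  by rewrite horner_mmap_line; apply: meval_eq => i; rewrite [RHS]a_line.
have : q = 0.
  apply: closed_poly_eq0 => s nz_s; rewrite qE.
  have /eqP := (zeroset_in_idealP gens (a s)).2 (va s) _ IhNg.
  by rewrite mevalM rmorphXn mulf_eq0 expf_eq0 (negbTE (nz_h s nz_s)) andbF => /eqP.
by move/(congr1 (horner^~ 0)); rewrite qE horner0.
Qed.

End SaturationLines.

Section SingularFiberComponents.
Variables (k : fieldType) (m : nat).
Hypothesis hm : (5 <= m)%N.
Local Notation xv := (xv k m).
Local Notation yv := (yv k m).
Local Notation zv := (zv k m).
Local Notation fgens := (fgens k m).
Implicit Types (a : point k m).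

Lemma Zm0_of_vanishes a :
  vanishes ([:: xv 0; xv 1; yv 0; yv 1; zv 0; zv 1] ++ fgens) a -> Zm 0 a.
Proof.
move=> va; have /eqP := (zeroset_in_idealP _ a).2 va _ (x2_sq_in_ideal _ hm).
rewrite rmorphXn expf_eq0 /= => x2a.
by apply/zeroset_in_idealP; move: va; rewrite /vanishes !all_cat /= x2a.
Qed.

Lemma Zm12_sub_Zm0 a : Zm 1 a -> Zm 2 a -> Zm 0 a.
Proof.
move=> /zeroset_sat_vanishes v1 /zeroset_sat_vanishes v2; apply: Zm0_of_vanishes.
move: v1 v2; rewrite /vanishes !all_cat /= !andbT.
by case/andP=> /and5P[-> -> -> -> ->] -> /andP[/and5P[_ _ _ _ ->]].
Qed.

Lemma Zm13_sub_Zm0 a : Zm 1 a -> Zm 3 a -> Zm 0 a.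
Proof.
move=> /zeroset_sat_vanishes v1 /zeroset_sat_vanishes v3; apply: Zm0_of_vanishes.
move: v1 v3; rewrite /vanishes !all_cat /= !andbT mevalD.
case/andP=> /and5P[-> -> -> /eqP y1a ->] -> /andP[/and5P[_ _ _ _]].
by rewrite y1a add0r => ->; rewrite eqxx.
Qed.

Lemma Zm23_sub_Zm0 a : Zm 2 a -> Zm 3 a -> Zm 0 a.
Proof.
move=> /zeroset_sat_vanishes v2 /zeroset_sat_vanishes v3; apply: Zm0_of_vanishes.
move: v2 v3; rewrite /vanishes !all_cat /= !andbT mevalD.
case/andP=> /and5P[-> -> -> -> /eqP z1a] -> /andP[/and5P[_ _ _ _]].
by rewrite z1a addr0 => ->; rewrite eqxx.
Qed.

Lemma Zm_cap i j : (0 < i < 4)%N -> (0 < j < 4)%N -> i != j ->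
  psub (pcap (Zm i) (Zm j)) (@Zm k m 0).
Proof.
case: i => [|[|[|[|i]]]] //; case: j => [|[|[|[|j]]]] // _ _ _ a [Zia Zja].
- exact: Zm12_sub_Zm0.
- exact: Zm13_sub_Zm0.
- exact: Zm12_sub_Zm0.
- exact: Zm23_sub_Zm0.
- exact: Zm13_sub_Zm0.
- exact: Zm23_sub_Zm0.
Qed.

End SingularFiberComponents.

Section TangentJets.
Variables (k : closedFieldType) (m : nat).
Hypotheses (hm : (5 <= m)%N) (pchar2 : 2 \in [pchar k]).
Local Notation xv := (xv k m).
Local Notation yv := (yv k m).
Local Notation zv := (zv k m).
Local Notation fgens := (fgens k m).

(* At s = 0 the witnesses separating the components; for s != 0 the
   coefficients y1 = u s and z1 = v s are the saturating variables. *)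
Definition tangent_jet (u v s : k) : point k m :=
  jet_point 0 (u *: ('X^2 + s *: 'X)) (v *: ('X^2 + s *: 'X)).

Lemma tangent_jet_line u v s i :
  tangent_jet u v s i = tangent_jet u v 0 i + s * jet_point 0 (u *: 'X) (v *: 'X) i.
Proof.
have split_line (w : k) : w *: ('X^2 + s *: 'X) = w *: ('X^2 + 0 *: 'X) + s *: (w *: 'X).
  by rewrite scale0r addr0 scalerDr !scalerA mulrC.
by rewrite -jet_point_line /tangent_jet !split_line scaler0 addr0.
Qed.

Lemma size_tangent (w s : k) : (size (w *: ('X^2 + s *: 'X)) <= m.+1)%N.
Proof.
have le3m : (3 <= m.+1)%N by rewrite ltnS (leq_trans _ hm).
apply: leq_trans (size_scale_leq _ _) _; apply: leq_trans (size_polyD _ _) _.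
by rewrite geq_max size_polyXn le3m (leq_trans (size_scale_leq _ _)) // size_polyX ltnW.
Qed.

Lemma coef_tangent (w s : k) i :
  (w *: ('X^2 + s *: 'X))`_i = if i == 1%N then w * s else if i == 2%N then w else 0.
Proof.
by rewrite coefZ coefD coefZ coefXn coefX; case: i => [|[|[|i]]] /=;
  rewrite ?(mulr0, mulr1, addr0, add0r).
Qed.

Lemma meval_xv_tangent u v s i : (i <= 5)%N -> (xv i).@[tangent_jet u v s] = 0.
Proof. by move=> le_i5; rewrite meval_xv_jet ?coef0 // (leq_trans le_i5 hm). Qed.

Lemma meval_yv_tangent u v s i : (i <= 5)%N ->
  (yv i).@[tangent_jet u v s] = if i == 1%N then u * s else if i == 2%N then u else 0.
Proof. by move=> le_i5; rewrite meval_yv_jet ?coef_tangent // (leq_trans le_i5 hm). Qed.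

Lemma meval_zv_tangent u v s i : (i <= 5)%N ->
  (zv i).@[tangent_jet u v s] = if i == 1%N then v * s else if i == 2%N then v else 0.
Proof. by move=> le_i5; rewrite meval_zv_jet ?coef_tangent // (leq_trans le_i5 hm). Qed.

Lemma fS_tangent (u v s : k) : fS 0 (u *: ('X^2 + s *: 'X)) (v *: ('X^2 + s *: 'X)) =
  (u * v * (u + v)) *: ('X^2 + s *: 'X) ^+ 3.
Proof. by rewrite /fS -!mul_polyC !polyCM polyCD; ring. Qed.

Lemma vanishes_fgens_tangent u v s :
  u * v * (u + v) = 0 -> vanishes fgens (tangent_jet u v s).
Proof.
move=> uv0; apply: vanishes_fgens_jet; rewrite ?size_tangent ?size_poly0 //.
by rewrite fS_tangent uv0 scale0r.
Qed.

Lemma tangent_jet_Zm0 u v : u * v * (u + v) = 0 -> Zm 0 (tangent_jet u v 0).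
Proof.
move=> uv0; apply: (Zm0_of_vanishes hm); rewrite /vanishes all_cat.
apply/andP; split; last exact: vanishes_fgens_tangent.
by rewrite /= !meval_xv_tangent // !meval_yv_tangent // !meval_zv_tangent //= !mulr0 eqxx.
Qed.

Lemma tangent_jet_sat (L : seq {mpoly k[nv m]}) h u v : u * v * (u + v) = 0 ->
  (forall s, vanishes L (tangent_jet u v s)) ->
  (forall s, s != 0 -> h.@[tangent_jet u v s] != 0) ->
  zeroset (in_sat (L ++ fgens) h) (tangent_jet u v 0).
Proof.
move=> uv0 vL nz_h.
apply: (zeroset_sat_line (a := tangent_jet u v) (d := jet_point 0 (u *: 'X) (v *: 'X))) => //.
  exact: tangent_jet_line.
move=> s; rewrite /vanishes all_cat; apply/andP.
by split; [apply: vL | apply: vanishes_fgens_tangent].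
Qed.

Lemma tangent_jet_Zm1 v : v != 0 -> Zm 1 (tangent_jet 0 v 0).
Proof.
move=> nz_v; apply: tangent_jet_sat => [|s|s nz_s]; first by rewrite !mul0r.
  rewrite /vanishes /= !meval_xv_tangent // !meval_yv_tangent // !meval_zv_tangent //=.
  by rewrite !mul0r eqxx.
by rewrite meval_zv_tangent //= mulf_neq0.
Qed.

Lemma tangent_jet_Zm2 u : u != 0 -> Zm 2 (tangent_jet u 0 0).
Proof.
move=> nz_u; apply: tangent_jet_sat => [|s|s nz_s]; first by rewrite mulr0 mul0r.
  rewrite /vanishes /= !meval_xv_tangent // !meval_yv_tangent // !meval_zv_tangent //=.
  by rewrite !mul0r eqxx.
by rewrite meval_yv_tangent //= mulf_neq0.
Qed.

Lemma tangent_jet_Zm3 u : u != 0 -> Zm 3 (tangent_jet u u 0).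
Proof.
move=> nz_u; apply: tangent_jet_sat => [|s|s nz_s]; first by rewrite addrr_pchar2 // mulr0.
  rewrite /vanishes /= mevalD !meval_xv_tangent // !meval_yv_tangent // !meval_zv_tangent //=.
  by rewrite addrr_pchar2 // eqxx.
by rewrite meval_yv_tangent //= mulf_neq0.
Qed.

Lemma tangent_jet_Zm1_eq0 u v : Zm 1 (tangent_jet u v 0) -> u = 0.
Proof.
move=> /(_ _ (I1_cert hm pchar2)) /eqP.
rewrite expr2 !(mevalD, mevalM) meval_zv_tangent // !meval_yv_tangent //=.
by rewrite !(mulr0, mul0r, add0r) mulf_eq0 orbb => /eqP.
Qed.

Lemma tangent_jet_Zm2_eq0 u v : Zm 2 (tangent_jet u v 0) -> v = 0.
Proof.
move=> /(_ _ (I2_cert hm pchar2)) /eqP.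
rewrite expr2 !(mevalD, mevalM) meval_yv_tangent // !meval_zv_tangent //=.
by rewrite !(mulr0, mul0r, add0r) mulf_eq0 orbb => /eqP.
Qed.

Lemma tangent_jet_Zm3_eq0 u v : Zm 3 (tangent_jet u v 0) -> u + v = 0.
Proof.
move=> /(_ _ (I3_cert hm pchar2)) /eqP.
rewrite expr2 !(mevalD, mevalM) !meval_yv_tangent // !meval_zv_tangent //=.
by rewrite !(mulr0, mul0r, add0r) mulf_eq0 orbb => /eqP.
Qed.

Lemma Zm_separated i : (0 < i < 4)%N ->
  exists p : point k m, forall j, (j < 4)%N -> Zm j p <-> (j == 0%N) || (j == i).
Proof.
case: i => [|[|[|[|i]]]] // _.
- exists (tangent_jet 0 1 0) => -[|[|[|[|j]]]] // _; split=> //= Zp.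
  + by apply: tangent_jet_Zm0; rewrite !mul0r.
  + exact: tangent_jet_Zm1 (oner_neq0 k).
  + by move/eqP: (tangent_jet_Zm2_eq0 Zp); rewrite oner_eq0.
  + by move/eqP: (tangent_jet_Zm3_eq0 Zp); rewrite add0r oner_eq0.
- exists (tangent_jet 1 0 0) => -[|[|[|[|j]]]] // _; split=> //= Zp.
  + by apply: tangent_jet_Zm0; rewrite mulr0 mul0r.
  + by move/eqP: (tangent_jet_Zm1_eq0 Zp); rewrite oner_eq0.
  + exact: tangent_jet_Zm2 (oner_neq0 k).
  + by move/eqP: (tangent_jet_Zm3_eq0 Zp); rewrite addr0 oner_eq0.
- exists (tangent_jet 1 1 0) => -[|[|[|[|j]]]] // _; split=> //= Zp.
  + by apply: tangent_jet_Zm0; rewrite addrr_pchar2 // mulr0.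
  + by move/eqP: (tangent_jet_Zm1_eq0 Zp); rewrite oner_eq0.
  + by move/eqP: (tangent_jet_Zm2_eq0 Zp); rewrite oner_eq0.
  + exact: tangent_jet_Zm3 (oner_neq0 k).
Qed.

End TangentJets.

Section FamilyOfIntersections.
Variables (T : Type) (Z : nat -> T -> Prop).
Implicit Types (A B : T -> Prop).

(* For Z = Zm these unfold to in_family and maximal_in_family. *)
Definition cap_family A : Prop :=
  exists i j : nat, [/\ (i < 4)%N, (j < 4)%N, i != j & pseteq A (pcap (Z i) (Z j))].

Definition cap_maximal A : Prop :=
  cap_family A /\ forall B, cap_family B -> psub A B -> pseteq A B.

Lemma pseteq_sym A B : pseteq A B -> pseteq B A.
Proof. by case. Qed.

Lemma pseteq_trans A B C : pseteq A B -> pseteq B C -> pseteq A C.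
Proof. by move=> [AB BA] [BC CB]; split=> a ?; [apply/BC/AB | apply/BA/CB]. Qed.

Lemma pcapC A B : pseteq (pcap A B) (pcap B A).
Proof. by split=> a []. Qed.

Hypothesis Zcap : forall i j, (0 < i < 4)%N -> (0 < j < 4)%N -> i != j ->
  psub (pcap (Z i) (Z j)) (Z 0).
Hypothesis Zsep : forall i, (0 < i < 4)%N ->
  exists p, forall j, (j < 4)%N -> Z j p <-> (j == 0%N) || (j == i).

Lemma cap0_family i : (0 < i < 4)%N -> cap_family (pcap (Z 0) (Z i)).
Proof.
case/andP=> i_gt0 i_lt4; exists 0%N, i; split=> //; first by rewrite eq_sym -lt0n.
by split.
Qed.

Lemma cap_family_sub_cap0 B : cap_family B ->
  exists2 i, (0 < i < 4)%N & psub B (pcap (Z 0) (Z i)).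
Proof.
case=> i [j [i_lt4 j_lt4 ne_ij [sBij _]]].
have [i0 | i_gt0] := posnP i; first subst i.
  by exists j; rewrite // j_lt4 andbT lt0n eq_sym.
have [j0 | j_gt0] := posnP j; first subst j.
  by exists i; rewrite ?i_gt0 // => a /sBij[].
exists i; rewrite ?i_gt0 // => a /sBij[Zia Zja]; split=> //.
by apply: (Zcap _ _ ne_ij); rewrite ?i_gt0 ?j_gt0.
Qed.

Lemma cap0_sub_cap i j l : (0 < i < 4)%N -> (j < 4)%N -> (l < 4)%N -> j != l ->
  psub (pcap (Z 0) (Z i)) (pcap (Z j) (Z l)) ->
  pseteq (pcap (Z 0) (Z i)) (pcap (Z j) (Z l)).
Proof.
move=> i_bd j_lt4 l_lt4 ne_jl s0i; have [p Zp] := Zsep i_bd.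
have /s0i[/(Zp _ j_lt4) Zj /(Zp _ l_lt4) Zl] : pcap (Z 0) (Z i) p.
  by split; apply/Zp; rewrite ?eqxx ?orbT //; case/andP: i_bd.
move: ne_jl; case/orP: Zj => /eqP->; case/orP: Zl => /eqP->; rewrite ?eqxx // => _.
  by split.
exact: pcapC.
Qed.

Lemma cap_maximalP A :
  cap_maximal A <-> exists2 i, (0 < i < 4)%N & pseteq A (pcap (Z 0) (Z i)).
Proof.
split=> [[famA maxA] | [i i_bd eqA]].
  have [i i_bd sA] := cap_family_sub_cap0 famA.
  by exists i => //; apply: maxA (cap0_family i_bd) sA.
split=> [|B [j [l [j_lt4 l_lt4 ne_jl eqB]]] sAB].
  have [j [l [? ? ? eq_jl]]] := cap0_family i_bd.
  by exists j, l; split=> //; apply: pseteq_trans eqA eq_jl.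
apply: (pseteq_trans eqA (pseteq_trans _ (pseteq_sym eqB))).
by apply: cap0_sub_cap => // a /(proj2 eqA) /sAB /(proj1 eqB).
Qed.

Lemma cap0_not_sub i j : (0 < i < 4)%N -> (j < 4)%N -> j != 0%N -> j != i ->
  ~ psub (pcap (Z 0) (Z i)) (Z j).
Proof.
move=> i_bd j_lt4 nz_j ne_ji s0i; have [p Zp] := Zsep i_bd.
have /s0i/(Zp _ j_lt4) : pcap (Z 0) (Z i) p.
  by split; apply/Zp; rewrite ?eqxx ?orbT //; case/andP: i_bd.
by rewrite (negbTE nz_j) (negbTE ne_ji).
Qed.

Lemma cap0_neq i j : (0 < i < 4)%N -> (0 < j < 4)%N -> i != j ->
  ~ pseteq (pcap (Z 0) (Z i)) (pcap (Z 0) (Z j)).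
Proof.
move=> i_bd /andP[j_gt0 j_lt4] ne_ij [s0ij _].
by apply: (cap0_not_sub i_bd j_lt4); [rewrite -lt0n | rewrite eq_sym | move=> a /s0ij[]].
Qed.

Lemma cap_proper i j : (0 < i < 4)%N -> (0 < j < 4)%N -> i != j ->
  psubproper (pcap (Z i) (Z j)) (Z 0).
Proof.
move=> i_bd j_bd ne_ij; split; first exact: Zcap.
case/andP: j_bd => j_gt0 j_lt4 s0ij.
by apply: (cap0_not_sub i_bd j_lt4); [rewrite -lt0n | rewrite eq_sym | move=> a [/s0ij[]]].
Qed.

Lemma cap_maximal_iff A : cap_maximal A <->
  pseteq A (pcap (Z 0) (Z 1)) \/ pseteq A (pcap (Z 0) (Z 2)) \/ pseteq A (pcap (Z 0) (Z 3)).
Proof.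
split=> [/cap_maximalP[[|[|[|[|i]]]] // _ eqA] | eqA].
- by left.
- by right; left.
- by right; right.
by apply/cap_maximalP; case: eqA => [eqA|[eqA|eqA]]; [exists 1%N | exists 2%N | exists 3%N].
Qed.

End FamilyOfIntersections.

Theorem theorem3p8 (k : closedFieldType) (hchar : 2%N \in [pchar k])
  (m : nat) (hm : (5 <= m)%N) :
  let Z := @Zm k m in
  (forall A : point k m -> Prop,
     maximal_in_family A <->
       (pseteq A (pcap (Z 0%N) (Z 1%N)) \/ pseteq A (pcap (Z 0%N) (Z 2%N)) \/
        pseteq A (pcap (Z 0%N) (Z 3%N))))
  /\ ~ pseteq (pcap (Z 0%N) (Z 1%N)) (pcap (Z 0%N) (Z 2%N))
  /\ ~ pseteq (pcap (Z 0%N) (Z 2%N)) (pcap (Z 0%N) (Z 3%N))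
  /\ ~ pseteq (pcap (Z 0%N) (Z 1%N)) (pcap (Z 0%N) (Z 3%N))
  /\ psubproper (pcap (Z 1%N) (Z 2%N)) (Z 0%N)
  /\ psubproper (pcap (Z 2%N) (Z 3%N)) (Z 0%N)
  /\ psubproper (pcap (Z 3%N) (Z 1%N)) (Z 0%N).
Proof.
move=> Z; have Zcap := @Zm_cap k m hm; have Zsep := Zm_separated hm hchar.
split; first exact: cap_maximal_iff Zcap Zsep.
split; first exact: (cap0_neq Zsep).
split; first exact: (cap0_neq Zsep).
split; first exact: (cap0_neq Zsep).
split; first exact: (cap_proper Zcap Zsep).
split; first exact: (cap_proper Zcap Zsep).
exact: (cap_proper Zcap Zsep).
Qed.
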